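(* Let $A\in\mathcal A$ and $k\ge1$, and let $B_A(\cdot;k)$ be its $k$-th degree Bernstein polynomial. Assume that ${\boldsymbol w}\mapsto B_A({\boldsymbol w};k)$ is convex on $\mathcal S_{d-1}$ and that $B_A({\boldsymbol v}_j;k)=1$ for all $j\in\{0,\dots,d-1\}$. Then $$B_A({\boldsymbol w};k)\ge\max(w_1,\dots,w_d)\ \text{ for all }{\boldsymbol w}\in\mathcal S_{d-1}\iff D_{{\boldsymbol v}_i-{\boldsymbol v}_j}B_A({\boldsymbol v}_j;k)\ge-1\ \text{ for all }(i,j)\in\{0,\dots,d-1\}^2,\ i\ne j.$$
   Context: $d\ge2$; $\mathcal S_{d-1}=\{(w_1,\dots,w_{d-1})\in[0,1]^{d-1}:\sum w_i\le1\}\subset\mathbb R^{d-1}$, $w_d=1-w_1-\dots-w_{d-1}$. $\mathcal A$ is the family of convex functions $A:\mathcal S_{d-1}\to[1/d,1]$ with $\max(w_1,\dots,w_d)\le A({\boldsymbol w})\le1$. $\Gamma_k$ is the set of ${\boldsymbol\alpha}\in\{0,\dots,k\}^{d-1}$ with $\sum\alpha_i\le k$, $\alpha_d=k-\sum_{i<d}\alpha_i$; $b_{\boldsymbol\alpha}({\boldsymbol w};k)=\frac{k!}{\alpha_1!\cdots\alpha_d!}\prod_{i=1}^dw_i^{\alpha_i}$ and $B_A({\boldsymbol w};k)=\sum_{{\boldsymbol\alpha}\in\Gamma_k}A({\boldsymbol\alpha}/k)b_{\boldsymbol\alpha}({\boldsymbol w};k)$ (a polynomial, hence defined on all of $\mathbb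 R^{d-1}$). The vertices are ${\boldsymbol v}_0={\bf 0}$ and ${\boldsymbol v}_r={\boldsymbol e}_r$ (canonical unit vector of $\mathbb R^{d-1}$), $r=1,\dots,d-1$. For ${\boldsymbol u}\in\mathbb R^{d-1}$, $D_{\boldsymbol u}B({\boldsymbol w};k)={\boldsymbol u}^\top\nabla B({\boldsymbol w};k)$ denotes the directional derivative. *)

From Stdlib Require Import Reals Lra Lia List Arith.
Import ListNotations.
Open Scope R_scope.

(* Points of R^(d-1) are represented as functions nat -> R; coordinate w_{i+1}
   of the paper is [w i] for i < d-1.  Points of the simplex are required to
   vanish at indices >= d-1, so S_{d-1} is faithfully embedded. *)

Fixpoint sumR (n : nat) (f : nat -> R) : R :=
  match n with O => 0 | S m => sumR m f + f m end.

Fixpoint prodR (n : nat) (f : nat -> R) : R :=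
  match n with O => 1 | S m => prodR m f * f m end.

(* w_d = 1 - w_1 - ... - w_{d-1} *)
Definition wlast (d : nat) (w : nat -> R) : R := 1 - sumR (d - 1) w.

Definition InSimplex (d : nat) (w : nat -> R) : Prop :=
  (forall i, (d - 1 <= i)%nat -> w i = 0) /\
  (forall i, (i < d - 1)%nat -> 0 <= w i) /\
  sumR (d - 1) w <= 1.

Definition maxcoord (d : nat) (w : nat -> R) : R :=
  fold_right Rmax (wlast d w) (map w (seq 0 (d - 1))).

Definition ConvexOnSimplex (d : nat) (f : (nat -> R) -> R) : Prop :=
  forall w1 w2 t, InSimplex d w1 -> InSimplex d w2 -> 0 <= t <= 1 ->
    f (fun i => t * w1 i + (1 - t) * w2 i) <= t * f w1 + (1 - t) * f w2.

Definition InClassA (d : nat) (A : (nat -> R) -> R) : Prop :=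
  ConvexOnSimplex d A /\
  forall w, InSimplex d w ->
    1 / INR d <= A w /\ A w <= 1 /\ maxcoord d w <= A w.

Fixpoint tuples (n m : nat) : list (list nat) :=
  match n with
  | O => [[]]
  | S n' => flat_map (fun a => map (cons a) (tuples n' m)) (seq 0 (S m))
  end.

Definition Gamma (d k : nat) : list (list nat) :=
  filter (fun a => Nat.leb (list_sum a) k) (tuples (d - 1) k).

Definition alpha_vec (k : nat) (a : list nat) : nat -> R :=
  fun i => INR (nth i a 0%nat) / INR k.

(* b_alpha(w;k), with alpha_d = k - sum alpha_i *)
Definition bern_basis (d k : nat) (a : list nat) (w : nat -> R) : R :=
  INR (fact k) /
    (prodR (d - 1) (fun i => INR (fact (nth i a 0%nat))) *
     INR (fact (k - list_sum a))) *
  prodR (d - 1) (fun i => w i ^ (nth i a 0%nat)) *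
  wlast d w ^ (k - list_sum a).

Definition Bern (d k : nat) (A : (nat -> R) -> R) (w : nat -> R) : R :=
  fold_right Rplus 0 (map (fun a => A (alpha_vec k a) * bern_basis d k a w) (Gamma d k)).

(* vertices: v_0 = 0, v_r = e_r (r = 1..d-1), i.e. coordinate index r-1 *)
Definition vertex (r : nat) : nat -> R :=
  fun i => if Nat.eqb r (S i) then 1 else 0.

Definition DirDeriv (f : (nat -> R) -> R) (w u : nat -> R) (l : R) : Prop :=
  derivable_pt_lim (fun t => f (fun i => w i + t * u i)) 0 l.

From Stdlib Require Import Reals Lra Lia List Arith FunctionalExtensionality.

Open Scope R_scope.

(* B is a polynomial, so its directional derivative at a point is a linear
   function of the direction.  If B >= max(w_1, ..., w_d) and B(v_j) = 1, then
   along the edge from v_j to v_i we have B >= 1 - t, which bounds the slope at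
   v_j below by -1.  Conversely, by convexity B(w) - 1 dominates the derivative
   at v_j in the direction w - v_j; writing w - v_j = sum_i l_i (v_i - v_j)
   with barycentric coordinates l, linearity and the edge bounds give
   B(w) - 1 >= -(1 - l_j), i.e. B(w) >= l_j for every j. *)

Definition is_linear (L : (nat -> R) -> R) : Prop :=
  forall a b u1 u2, L (fun i => a * u1 i + b * u2 i) = a * L u1 + b * L u2.

Definition GateauxLinear (f : (nat -> R) -> R) : Prop :=
  forall v, exists L, is_linear L /\ forall u, DirDeriv f v u (L u).

Lemma shift_by_zero (v u : nat -> R) : (fun i => v i + 0 * u i) = v.
Proof. apply functional_extensionality; intro; ring. Qed.

Lemma derivable_pt_lim_eq f x l l' :
  derivable_pt_lim f x l -> l = l' -> derivable_pt_lim f x l'.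
Proof. now intros ? <-. Qed.

Lemma GateauxLinear_const c : GateauxLinear (fun _ => c).
Proof.
intro v; exists (fun _ => 0); split; [intros a b u1 u2; ring|].
intro u; exact (derivable_pt_lim_const c 0).
Qed.

Lemma GateauxLinear_coord i : GateauxLinear (fun w => w i).
Proof.
intro v; exists (fun u => u i); split; [intros a b u1 u2; reflexivity|].
intro u; unfold DirDeriv.
eapply derivable_pt_lim_eq.
- exact (derivable_pt_lim_plus _ _ _ _ _ (derivable_pt_lim_const (v i) 0)
          (derivable_pt_lim_mult _ _ _ _ _ (derivable_pt_lim_id 0)
             (derivable_pt_lim_const (u i) 0))).
- cbv [fct_cte id]; ring.
Qed.

Lemma GateauxLinear_plus f g :
  GateauxLinear f -> GateauxLinear g -> GateauxLinear (fun w => f w + g w).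
Proof.
intros Hf Hg v.
destruct (Hf v) as [Lf [Lf_lin Lf_der]], (Hg v) as [Lg [Lg_lin Lg_der]].
exists (fun u => Lf u + Lg u); split.
- intros a b u1 u2; rewrite Lf_lin, Lg_lin; ring.
- intro u; exact (derivable_pt_lim_plus _ _ _ _ _ (Lf_der u) (Lg_der u)).
Qed.

Lemma GateauxLinear_minus f g :
  GateauxLinear f -> GateauxLinear g -> GateauxLinear (fun w => f w - g w).
Proof.
intros Hf Hg v.
destruct (Hf v) as [Lf [Lf_lin Lf_der]], (Hg v) as [Lg [Lg_lin Lg_der]].
exists (fun u => Lf u - Lg u); split.
- intros a b u1 u2; rewrite Lf_lin, Lg_lin; ring.
- intro u; exact (derivable_pt_lim_minus _ _ _ _ _ (Lf_der u) (Lg_der u)).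
Qed.

Lemma GateauxLinear_mult f g :
  GateauxLinear f -> GateauxLinear g -> GateauxLinear (fun w => f w * g w).
Proof.
intros Hf Hg v.
destruct (Hf v) as [Lf [Lf_lin Lf_der]], (Hg v) as [Lg [Lg_lin Lg_der]].
exists (fun u => Lf u * g v + f v * Lg u); split.
- intros a b u1 u2; rewrite Lf_lin, Lg_lin; ring.
- intro u; eapply derivable_pt_lim_eq.
  + exact (derivable_pt_lim_mult _ _ _ _ _ (Lf_der u) (Lg_der u)).
  + cbv beta; rewrite (shift_by_zero v u); ring.
Qed.

Lemma GateauxLinear_pow f n : GateauxLinear f -> GateauxLinear (fun w => f w ^ n).
Proof.
intro Hf; induction n as [|n IHn].
- exact (GateauxLinear_const 1).
- exact (GateauxLinear_mult _ _ Hf IHn).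
Qed.

Lemma GateauxLinear_sumR n (F : nat -> (nat -> R) -> R) :
  (forall i, GateauxLinear (F i)) -> GateauxLinear (fun w => sumR n (fun i => F i w)).
Proof.
intro HF; induction n as [|n IHn]; simpl.
- exact (GateauxLinear_const 0).
- exact (GateauxLinear_plus _ _ IHn (HF n)).
Qed.

Lemma GateauxLinear_prodR n (F : nat -> (nat -> R) -> R) :
  (forall i, GateauxLinear (F i)) -> GateauxLinear (fun w => prodR n (fun i => F i w)).
Proof.
intro HF; induction n as [|n IHn]; simpl.
- exact (GateauxLinear_const 1).
- exact (GateauxLinear_mult _ _ IHn (HF n)).
Qed.

Lemma GateauxLinear_list_sum {T : Type} (s : list T) (F : T -> (nat -> R) -> R) :
  (forall a, GateauxLinear (F a)) ->
  GateauxLinear (fun w => fold_right Rplus 0 (map (fun a => F a w) s)).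
Proof.
intro HF; induction s as [|a s IHs]; simpl.
- exact (GateauxLinear_const 0).
- exact (GateauxLinear_plus _ _ (HF a) IHs).
Qed.

Lemma GateauxLinear_wlast d : GateauxLinear (wlast d).
Proof.
apply (GateauxLinear_minus (fun _ => 1) (fun w => sumR (d - 1) (fun i => w i))).
- apply GateauxLinear_const.
- apply (GateauxLinear_sumR _ (fun i w => w i)); intro; apply GateauxLinear_coord.
Qed.

Lemma GateauxLinear_bern_basis d k a : GateauxLinear (bern_basis d k a).
Proof.
apply GateauxLinear_mult; [apply GateauxLinear_mult|].
- apply GateauxLinear_const.
- apply (GateauxLinear_prodR _ (fun i w => w i ^ nth i a 0%nat)); intro i.
  apply GateauxLinear_pow, GateauxLinear_coord.
- apply GateauxLinear_pow, GateauxLinear_wlast.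
Qed.

Lemma GateauxLinear_Bern d k A : GateauxLinear (Bern d k A).
Proof.
apply (GateauxLinear_list_sum (Gamma d k)
         (fun a w => A (alpha_vec k a) * bern_basis d k a w)); intro a.
apply (GateauxLinear_mult (fun _ => A (alpha_vec k a))).
- apply GateauxLinear_const.
- apply GateauxLinear_bern_basis.
Qed.

Lemma derivable_pt_lim_le_of_slope_le (g : R -> R) l M :
  derivable_pt_lim g 0 l ->
  (forall t, 0 < t <= 1 -> g t - g 0 <= t * M) -> l <= M.
Proof.
intros Hg Hslope.
destruct (Rle_lt_dec l M) as [|HMl]; [assumption|exfalso].
destruct (Hg (l - M) ltac:(lra)) as [delta Hdelta].
pose proof (cond_pos delta) as Hdelta_pos.
set (t := Rmin (delta / 2) 1).
assert (Ht_pos : 0 < t) by (apply Rmin_glb_lt; lra).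
assert (Ht_le1 : t <= 1) by apply Rmin_r.
assert (Ht_half : t <= delta / 2) by apply Rmin_l.
assert (Ht_small : Rabs t < delta) by (rewrite Rabs_right by lra; lra).
specialize (Hdelta t ltac:(lra) Ht_small); rewrite Rplus_0_l in Hdelta.
apply Rabs_def2 in Hdelta.
assert (Hquot : (g t - g 0) / t <= M).
{ apply Rmult_le_reg_l with t; [lra|].
  replace (t * ((g t - g 0) / t)) with (g t - g 0) by (field; lra).
  exact (Hslope t (conj Ht_pos Ht_le1)). }
lra.
Qed.

Lemma derivable_pt_lim_ge_of_slope_ge (g : R -> R) l M :
  derivable_pt_lim g 0 l ->
  (forall t, 0 < t <= 1 -> t * M <= g t - g 0) -> M <= l.
Proof.
intros Hg Hslope.
enough (- l <= - M) by lra.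
apply (derivable_pt_lim_le_of_slope_le (- g)%F); [exact (derivable_pt_lim_opp _ _ _ Hg)|].
intros t Ht; specialize (Hslope t Ht); unfold opp_fct; lra.
Qed.

Lemma DirDeriv_le f v u l M :
  DirDeriv f v u l ->
  (forall t, 0 < t <= 1 -> f (fun i => v i + t * u i) <= f v + t * M) -> l <= M.
Proof.
intros Hf Hslope; apply (derivable_pt_lim_le_of_slope_le _ _ _ Hf).
intros t Ht; cbv beta; rewrite shift_by_zero; specialize (Hslope t Ht); lra.
Qed.

Lemma DirDeriv_ge f v u l M :
  DirDeriv f v u l ->
  (forall t, 0 < t <= 1 -> f v + t * M <= f (fun i => v i + t * u i)) -> M <= l.
Proof.
intros Hf Hslope; apply (derivable_pt_lim_ge_of_slope_ge _ _ _ Hf).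
intros t Ht; cbv beta; rewrite shift_by_zero; specialize (Hslope t Ht); lra.
Qed.

Lemma DirDeriv_le_of_convex d f v w l :
  ConvexOnSimplex d f -> InSimplex d v -> InSimplex d w ->
  DirDeriv f v (fun i => w i - v i) l -> l <= f w - f v.
Proof.
intros Hf Hv Hw Hder; apply (DirDeriv_le _ _ _ _ _ Hder); intros t Ht.
replace (fun i => v i + t * (w i - v i)) with (fun i => t * w i + (1 - t) * v i)
  by (apply functional_extensionality; intro; ring).
pose proof (Hf w v t Hw Hv ltac:(lra)); lra.
Qed.

Lemma sumR_ext n f g : (forall i, (i < n)%nat -> f i = g i) -> sumR n f = sumR n g.
Proof. induction n; intro H; simpl; [reflexivity|]. rewrite IHn, H; auto. Qed.

Lemma sumR_le n f g : (forall i, (i < n)%nat -> f i <= g i) -> sumR n f <= sumR n g.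
Proof.
induction n; intro H; simpl; [lra|].
apply Rplus_le_compat; [apply IHn; intros|]; apply H; lia.
Qed.

Lemma sumR_linear n a b f g :
  sumR n (fun m => a * f m + b * g m) = a * sumR n f + b * sumR n g.
Proof. induction n; simpl; [|rewrite IHn]; ring. Qed.

Lemma sumR_shift n f : sumR (S n) f = f O + sumR n (fun i => f (S i)).
Proof. induction n; simpl in *; [|rewrite IHn]; ring. Qed.

Lemma sumR_indicator n m f :
  sumR n (fun r => f r * (if Nat.eqb r m then 1 else 0)) = if Nat.ltb m n then f m else 0.
Proof.
induction n; simpl; [reflexivity|]. rewrite IHn.
destruct (Nat.eqb_spec n m), (Nat.ltb_spec m n), (Nat.ltb_spec m (S n));
  try lia; subst; ring.
Qed.

Lemma is_linear_zero L u : is_linear L -> (forall m, u m = 0) -> L u = 0.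
Proof.
intros HL Hu.
replace u with (fun i => 0 * u i + 0 * u i)
  by (apply functional_extensionality; intro; rewrite Hu; ring).
rewrite HL; ring.
Qed.

Lemma is_linear_sumR L n c U :
  is_linear L ->
  L (fun m => sumR n (fun i => c i * U i m)) = sumR n (fun i => c i * L (U i)).
Proof.
intro HL; induction n as [|n IHn]; simpl.
- apply is_linear_zero; auto.
- rewrite <- IHn, <- (Rmult_1_l (L (fun m => sumR n _))), <- HL.
  f_equal; apply functional_extensionality; intro; ring.
Qed.

(* [bary d w 0] is w_d and [bary d w (S r)] is w_(r+1): the weight of vertex
   v_j in w, matching the indexing of [vertex]. *)
Definition bary (d : nat) (w : nat -> R) (j : nat) : R :=
  match j with O => wlast d w | S r => w r end.

Lemma bary_affine d x y a b j :
  a + b = 1 -> bary d (fun m => a * x m + b * y m) j = a * bary d x j + b * bary d y j.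
Proof.
intro Hab; destruct j; simpl; [|reflexivity].
unfold wlast; rewrite sumR_linear; replace b with (1 - a) by lra; ring.
Qed.

Lemma sumR_bary d w : (1 <= d)%nat -> sumR d (bary d w) = 1.
Proof.
intro Hd; destruct d as [|d]; [lia|].
rewrite sumR_shift; change (sumR d (fun i => bary (S d) w (S i))) with (sumR d w).
simpl bary; unfold wlast; replace (S d - 1)%nat with d by lia; ring.
Qed.

Lemma bary_nonneg d w j : InSimplex d w -> (j < d)%nat -> 0 <= bary d w j.
Proof.
intros [_ [Hpos Hsum]] Hj; destruct j; simpl; [unfold wlast; lra|].
apply Hpos; lia.
Qed.

Lemma bary_vertex d i j :
  (i < d)%nat -> (j < d)%nat -> bary d (vertex i) j = if Nat.eqb i j then 1 else 0.
Proof.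
intros Hi Hj; destruct j as [|r]; [|reflexivity]; simpl; unfold wlast.
destruct i as [|p]; simpl.
- rewrite (sumR_ext _ _ (fun r => 0 * (if Nat.eqb r 0 then 1 else 0)))
    by (intros; unfold vertex; simpl; ring).
  rewrite sumR_indicator; destruct (0 <? d - 1)%nat; ring.
- rewrite (sumR_ext _ _ (fun r => 1 * (if Nat.eqb r p then 1 else 0)))
    by (intros r _; unfold vertex; simpl; rewrite Nat.eqb_sym; ring).
  rewrite sumR_indicator; destruct (Nat.ltb_spec p (d - 1)); [ring|lia].
Qed.

Lemma vertex_in_simplex d j : (j < d)%nat -> InSimplex d (vertex j).
Proof.
intro Hj; split; [|split].
- intros i Hi; unfold vertex; destruct (Nat.eqb_spec j (S i)); [lia|reflexivity].
- intros i Hi; unfold vertex; destruct (Nat.eqb j (S i)); lra.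
- pose proof (bary_vertex d j 0 Hj ltac:(lia)) as H0; simpl in H0; unfold wlast in H0.
  destruct (Nat.eqb j 0); lra.
Qed.

Lemma InSimplex_convex d x y a b :
  0 <= a -> 0 <= b -> a + b = 1 -> InSimplex d x -> InSimplex d y ->
  InSimplex d (fun m => a * x m + b * y m).
Proof.
intros Ha Hb Hab [Hx0 [Hxpos Hxsum]] [Hy0 [Hypos Hysum]]; split; [|split].
- intros i Hi; rewrite Hx0, Hy0 by auto; ring.
- intros i Hi; specialize (Hxpos i Hi); specialize (Hypos i Hi); nra.
- rewrite sumR_linear; nra.
Qed.

Lemma bary_le_maxcoord d w j : (j < d)%nat -> bary d w j <= maxcoord d w.
Proof.
assert (Hfold : forall b s x, In x s \/ x = b -> x <= fold_right Rmax b s).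
{ intros b s x; induction s as [|y s IHs]; simpl; intro Hx.
  - destruct Hx as [[]| ->]; lra.
  - destruct Hx as [[->|Hx]|Hx]; [apply Rmax_l| |];
      (eapply Rle_trans; [apply IHs; tauto|apply Rmax_r]). }
intro Hj; unfold maxcoord; apply Hfold; destruct j as [|r]; [right; reflexivity|].
left; apply (in_map w), in_seq; lia.
Qed.

Lemma maxcoord_le d w M :
  (1 <= d)%nat -> (forall j, (j < d)%nat -> bary d w j <= M) -> maxcoord d w <= M.
Proof.
intros Hd Hbary; unfold maxcoord.
assert (Hlast : wlast d w <= M) by exact (Hbary 0%nat ltac:(lia)).
assert (Hcoords : forall x, In x (map w (seq 0 (d - 1))) -> x <= M).
{ intros x Hx; apply in_map_iff in Hx; destruct Hx as [r [<- Hr]].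
  apply in_seq in Hr; apply (Hbary (S r)); lia. }
induction (map w (seq 0 (d - 1))) as [|x s IHs]; simpl in *; [assumption|].
apply Rmax_lub; auto.
Qed.

Lemma sumR_bary_vertex d w m :
  (1 <= d)%nat -> InSimplex d w -> sumR d (fun i => bary d w i * vertex i m) = w m.
Proof.
intros Hd [Hw0 _]; destruct d as [|d]; [lia|].
rewrite sumR_shift; unfold vertex at 1; simpl (Nat.eqb 0 (S m)).
rewrite (sumR_ext d _ (fun r => w r * (if Nat.eqb r m then 1 else 0))) by reflexivity.
rewrite sumR_indicator; destruct (Nat.ltb_spec m d); [ring|].
rewrite Hw0 by lia; ring.
Qed.

Lemma sub_vertex_bary d w j m :
  (1 <= d)%nat -> InSimplex d w ->
  w m - vertex j m = sumR d (fun i => bary d w i * (vertex i m - vertex j m)).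
Proof.
intros Hd Hw.
rewrite (sumR_ext d _ (fun i => 1 * (bary d w i * vertex i m) + (- vertex j m) * bary d w i))
  by (intros; ring).
rewrite sumR_linear, sumR_bary, sumR_bary_vertex by auto; ring.
Qed.

Lemma is_linear_sub_vertex_ge d L w j :
  (1 <= d)%nat -> is_linear L -> InSimplex d w -> (j < d)%nat ->
  (forall i, (i < d)%nat -> i <> j -> -1 <= L (fun m => vertex i m - vertex j m)) ->
  bary d w j - 1 <= L (fun m => w m - vertex j m).
Proof.
intros Hd HL Hw Hj Hedge.
replace (fun m => w m - vertex j m)
  with (fun m => sumR d (fun i => bary d w i * (vertex i m - vertex j m)))
  by (apply functional_extensionality; intro; symmetry; apply sub_vertex_bary; auto).
rewrite is_linear_sumR by assumption.
apply Rle_trans with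
  (sumR d (fun i => (-1) * bary d w i + 1 * (bary d w i * (if Nat.eqb i j then 1 else 0)))).
- rewrite sumR_linear, sumR_bary, sumR_indicator by lia.
  destruct (Nat.ltb_spec j d); [lra|lia].
- apply sumR_le; intros i Hi.
  pose proof (bary_nonneg d w i Hw Hi).
  destruct (Nat.eqb_spec i j) as [->|Hij].
  + rewrite (is_linear_zero L _ HL) by (intro; ring); lra.
  + specialize (Hedge i Hi Hij); nra.
Qed.

Lemma DirDeriv_edge_ge_of_maxcoord_le d f i j l :
  (i < d)%nat -> (j < d)%nat -> i <> j ->
  (forall w, InSimplex d w -> maxcoord d w <= f w) -> f (vertex j) = 1 ->
  DirDeriv f (vertex j) (fun m => vertex i m - vertex j m) l -> -1 <= l.
Proof.
intros Hi Hj Hij Hmax Hfj Hder; apply (DirDeriv_ge _ _ _ _ _ Hder); intros t Ht.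
set (p := fun m => (1 - t) * vertex j m + t * vertex i m).
replace (fun m => vertex j m + t * (vertex i m - vertex j m)) with p
  by (apply functional_extensionality; intro; unfold p; ring).
assert (Hp : InSimplex d p)
  by (apply InSimplex_convex; try lra; apply vertex_in_simplex; assumption).
assert (Hpj : bary d p j = 1 - t).
{ unfold p; rewrite bary_affine, !bary_vertex, Nat.eqb_refl by (auto; lra).
  destruct (Nat.eqb_spec i j); [contradiction|ring]. }
pose proof (bary_le_maxcoord d p j Hj); pose proof (Hmax p Hp); lra.
Qed.

Lemma maxcoord_le_of_DirDeriv_edge_ge d f :
  (1 <= d)%nat -> GateauxLinear f -> ConvexOnSimplex d f ->
  (forall j, (j < d)%nat -> f (vertex j) = 1) ->
  (forall i j, (i < d)%nat -> (j < d)%nat -> i <> j ->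
     exists l, DirDeriv f (vertex j) (fun m => vertex i m - vertex j m) l /\ -1 <= l) ->
  forall w, InSimplex d w -> maxcoord d w <= f w.
Proof.
intros Hd Hf Hconv Hvert Hedge w Hw.
apply maxcoord_le; [assumption|]; intros j Hj.
destruct (Hf (vertex j)) as [L [HL HLder]].
assert (Htangent : L (fun m => w m - vertex j m) <= f w - 1).
{ rewrite <- (Hvert j Hj).
  exact (DirDeriv_le_of_convex d f _ _ _ Hconv (vertex_in_simplex d j Hj) Hw (HLder _)). }
enough (bary d w j - 1 <= L (fun m => w m - vertex j m)) by lra.
apply is_linear_sub_vertex_ge; auto.
intros i Hi Hij; destruct (Hedge i j Hi Hj Hij) as [l [Hl Hl_ge]].
rewrite <- (uniqueness_limite _ _ _ _ Hl (HLder _)); assumption.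
Qed.

Theorem mainTheorem5 (d k : nat) (A : (nat -> R) -> R) :
  (2 <= d)%nat -> (1 <= k)%nat ->
  InClassA d A ->
  ConvexOnSimplex d (Bern d k A) ->
  (forall j, (j < d)%nat -> Bern d k A (vertex j) = 1) ->
  ((forall w, InSimplex d w -> maxcoord d w <= Bern d k A w) <->
   (forall i j, (i < d)%nat -> (j < d)%nat -> i <> j ->
      exists l, DirDeriv (Bern d k A) (vertex j)
                  (fun m => vertex i m - vertex j m) l /\ -1 <= l)).
Proof.
intros Hd _ _ Hconv Hvert; split.
- intros Hmax i j Hi Hj Hij.
  destruct (GateauxLinear_Bern d k A (vertex j)) as [L [_ HLder]].
  exists (L (fun m => vertex i m - vertex j m)); split; [apply HLder|].
  exact (DirDeriv_edge_ge_of_maxcoord_le d _ i j _ Hi Hj Hij Hmax (Hvert j Hj) (HLder _)).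
- apply maxcoord_le_of_DirDeriv_edge_ge;
    [lia | apply GateauxLinear_Bern | exact Hconv | exact Hvert].
Qed.
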